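(* Let $p\ge3$ be real and $k_p=[(p+1)/2]$ (integer part). Then $$\sum_{k=1}^{k_p}\binom pk\mathrm B(k,p-k)\le4\log p.$$ More generally, for every $a>1$ there is a constant $0<C_a<\infty$ depending only on $a$ such that for all $p\ge3$, $$\sum_{k=1}^{k_p}\binom pk\mathrm B(ak,a(p-k))\le C_a(ap)^{1-a},\qquad\sum_{k=0}^{k_p-1}\binom{p-2}{k}\mathrm B(a(k+1),a(p-k-1))\le C_a(ap)^{-a}.$$
   Context: $\mathrm B(x,y)=\int_0^1t^{x-1}(1-t)^{y-1}dt$ is the beta function. For real $p$ and integer $k\ge1$, $\binom pk=\frac{p(p-1)\cdots(p-k+1)}{k!}$, and $\binom p0=1$. *)

From Stdlib Require Import Reals Lra ClassicalEpsilon Factorial.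
Open Scope R_scope.

(* Real power t^s for t >= 0, s >= 0, with the convention 0^0 = 1 and
   0^s = 0 for s > 0 (Rpower alone is wrong at t = 0). *)
Definition rpow (t s : R) : R :=
  if Req_EM_T t 0 then (if Req_EM_T s 0 then 1 else 0) else Rpower t s.

Definition beta_integrand (x y : R) (t : R) : R :=
  rpow t (x - 1) * rpow (1 - t) (y - 1).

(* Beta x y = Riemann integral over [0,1] of t^(x-1) (1-t)^(y-1),
   whenever that integrand is Riemann integrable (the case x,y >= 1
   used below, where it is continuous on [0,1]). *)
Definition Beta (x y : R) : R :=
  epsilon (inhabits 0)
    (fun l => exists pr : Riemann_integrable (beta_integrand x y) 0 1,
              RiemannInt pr = l).

Fixpoint falling (p : R) (k : nat) : R :=
  match k with
  | O => 1
  | S k' => falling p k' * (p - INR k')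
  end.

Definition binomR (p : R) (k : nat) : R := falling p k / INR (Factorial.fact k).

Definition kp (p : R) : nat := Z.to_nat (Int_part ((p + 1) / 2)).

From Stdlib Require Import Reals Lra Lia ClassicalEpsilon Factorial ZArith.
Open Scope R_scope.

(* For [x, y >= 1] integration by parts gives [B(1,y) = 1/y] and
   [B(x+1,y) = x/(x+y) B(x,y)], hence the closed forms
   [binom(p,k) B(k,p-k) = p/(k(p-k))] and [binom(p-2,k) B(k+1,p-k-1) = 1/(p-1)];
   the first sum is then harmonic.  For [a > 1] the integrand of [B(ax,ay)] is
   that of [B(x,y)] times [(t^x (1-t)^y)^(a-1)], and for [x = k <= (p+1)/2],
   [x + y = p] the maximum of [t^x (1-t)^y] is at most [e^(c(k-1))/p] with
   [c = ln(4/3) - 1/3 < 0], so both sums are dominated by geometric series. *)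

Lemma exp_nondecreasing x y : x <= y -> exp x <= exp y.
Proof. intros [H| ->]; [left; apply exp_increasing|]; lra. Qed.

Lemma ln_nondecreasing x y : 0 < x -> x <= y -> ln x <= ln y.
Proof. intros Hx [H| ->]; [left; apply ln_increasing|]; lra. Qed.

Lemma ln_le_sub_1 x : 0 < x -> ln x <= x - 1.
Proof. intros Hx. pose proof (exp_ineq1_le (ln x)) as H. rewrite exp_ln in H; lra. Qed.

Lemma ln_div x y : 0 < x -> 0 < y -> ln (x / y) = ln x - ln y.
Proof.
  intros. unfold Rdiv. rewrite ln_mult, ln_Rinv; try lra. now apply Rinv_0_lt_compat.
Qed.

(* [t ^ s] for [t > 0], extended by [0] (by [1] if [s = 0]) to [t <= 0], so that
   [powz s] is continuous on all of [R] for [s >= 0]. *)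
Definition powz (s t : R) : R :=
  if Rlt_dec 0 t then Rpower t s else if Req_EM_T s 0 then 1 else 0.

Lemma powz_pos s t : 0 < t -> powz s t = Rpower t s.
Proof. intros H; unfold powz; destruct (Rlt_dec 0 t); [auto|lra]. Qed.

Lemma powz_nonpos s t : t <= 0 -> s <> 0 -> powz s t = 0.
Proof.
  intros H Hs; unfold powz; destruct (Rlt_dec 0 t); [lra|].
  destruct (Req_EM_T s 0); [lra|auto].
Qed.

Lemma powz_0 t : powz 0 t = 1.
Proof.
  unfold powz; destruct (Rlt_dec 0 t).
  - unfold Rpower; rewrite Rmult_0_l, exp_0; auto.
  - destruct (Req_EM_T 0 0); [auto|lra].
Qed.

Lemma powz_1 s : powz s 1 = 1.
Proof. rewrite powz_pos by lra. unfold Rpower. rewrite ln_1, Rmult_0_r, exp_0; auto. Qed.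

Lemma powz_rpow s t : 0 <= t -> powz s t = rpow t s.
Proof.
  intros H. unfold powz, rpow.
  destruct (Rlt_dec 0 t); destruct (Req_EM_T t 0); try lra; reflexivity.
Qed.

Lemma powz_add1 s t : 0 < s -> powz (s + 1) t = t * powz s t.
Proof.
  intros Hs. destruct (Rlt_dec 0 t).
  - rewrite !powz_pos, Rpower_plus, Rpower_1 by auto; ring.
  - rewrite !powz_nonpos by lra. ring.
Qed.

Lemma powz_continuity_0 s : 0 < s -> continuity_pt (powz s) 0.
Proof.
  intros Hs eps Heps.
  exists (Rpower eps (/ s)). split; [apply exp_pos|].
  intros x [_ Hx]. simpl in *. unfold Rdist in *.
  rewrite (powz_nonpos s 0), Rminus_0_r in * by lra.
  destruct (Rlt_dec 0 x) as [Hx0|Hx0].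
  - rewrite powz_pos, Rabs_right by (auto; left; apply exp_pos).
    rewrite Rabs_right in Hx by lra.
    replace eps with (Rpower (Rpower eps (/ s)) s).
    + now apply Rlt_Rpower_l.
    + rewrite Rpower_mult, Rinv_l by lra. now apply Rpower_1.
  - rewrite powz_nonpos, Rabs_R0 by lra. auto.
Qed.

Lemma powz_continuity s : 0 <= s -> forall x, continuity_pt (powz s) x.
Proof.
  intros Hs x. destruct (Req_EM_T s 0) as [-> | Hs0].
  { apply continuity_pt_locally_ext with (fct_cte 1) 1; [lra| |].
    - intros; unfold fct_cte; now rewrite powz_0.
    - apply continuity_pt_const; now unfold constant, fct_cte. }
  destruct (Rtotal_order x 0) as [Hx|[-> | Hx]].
  - apply continuity_pt_locally_ext with (fct_cte 0) (- x); [lra| |].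
    + intros y Hy. unfold Rdist in Hy. apply Rabs_def2 in Hy. unfold fct_cte.
      rewrite powz_nonpos; lra.
    + apply continuity_pt_const; now unfold constant, fct_cte.
  - apply powz_continuity_0; lra.
  - apply continuity_pt_locally_ext with (fun t => Rpower t s) x; [lra| |].
    + intros y Hy. unfold Rdist in Hy. apply Rabs_def2 in Hy. rewrite powz_pos; lra.
    + apply derivable_continuous_pt. exists (s * Rpower x (s - 1)).
      now apply derivable_pt_lim_power.
Qed.

Lemma powz_derivable s :
  0 < s -> forall x, derivable_pt_lim (powz (s + 1)) x ((s + 1) * powz s x).
Proof.
  intros Hs x. destruct (Rtotal_order x 0) as [Hx|[-> | Hx]].
  - rewrite (powz_nonpos s x), Rmult_0_r by lra.
    apply derivable_pt_lim_locally_ext with (fct_cte 0) (x - 1) 0; [lra| |].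
    + intros z Hz. unfold fct_cte. rewrite powz_nonpos; lra.
    + apply derivable_pt_lim_const.
  - (* the difference quotient at 0 is [powz s h], which tends to [powz s 0 = 0] *)
    rewrite (powz_nonpos s 0), Rmult_0_r by lra.
    intros eps Heps. destruct (powz_continuity_0 s Hs eps Heps) as [alp [Halp H]].
    exists (mkposreal alp Halp). intros h Hh Hha.
    rewrite Rplus_0_l, powz_add1, (powz_nonpos (s + 1) 0) by lra.
    replace ((h * powz s h - 0) / h - 0) with (powz s h - 0) by (field; auto).
    specialize (H h). simpl in H. unfold Rdist in H. rewrite (powz_nonpos s 0) in H by lra.
    apply H. split; [unfold D_x, no_cond; split; auto | now rewrite Rminus_0_r].
  - apply derivable_pt_lim_locally_ext with (fun t => Rpower t (s + 1)) 0 (x + 1); [lra| |].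
    + intros; rewrite powz_pos; lra.
    + rewrite powz_pos by auto. replace (Rpower x s) with (Rpower x (s + 1 - 1)) by (f_equal; ring).
      now apply derivable_pt_lim_power.
Qed.

(* An antiderivative of [y * powz (y - 1)] on all of [R]: [powz 1] has a corner at
   [0], so the case [y = 1] uses the identity instead. *)
Definition powz_prim (y u : R) : R := if Req_EM_T y 1 then u else powz y u.

Lemma powz_prim_derivable y :
  1 <= y -> forall u, derivable_pt_lim (powz_prim y) u (y * powz (y - 1) u).
Proof.
  intros Hy u. unfold powz_prim. destruct (Req_EM_T y 1) as [-> | Hy1].
  - rewrite Rminus_diag, powz_0, Rmult_1_r. apply derivable_pt_lim_id.
  - pose proof (powz_derivable (y - 1) ltac:(lra) u) as H.
    now replace (y - 1 + 1) with y in H by ring.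
Qed.

Lemma powz_prim_nonneg y u : 1 <= y -> 0 <= u -> powz_prim y u = powz y u.
Proof.
  intros Hy Hu. unfold powz_prim. destruct (Req_EM_T y 1) as [-> |]; auto.
  destruct Hu as [Hu| <-]; [now rewrite powz_pos, Rpower_1 | rewrite powz_nonpos; lra].
Qed.

Lemma powz_prim_continuity y : 1 <= y -> forall u, continuity_pt (powz_prim y) u.
Proof.
  intros Hy u. apply derivable_continuous_pt.
  exists (y * powz (y - 1) u). now apply powz_prim_derivable.
Qed.

Lemma derivable_pt_lim_one_minus t : derivable_pt_lim (fun t => 1 - t) t (-1).
Proof.
  replace (-1) with (0 - 1) by ring.
  apply (derivable_pt_lim_minus (fct_cte 1) id);
    [apply derivable_pt_lim_const | apply derivable_pt_lim_id].
Qed.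

Lemma continuity_pt_one_minus (h : R -> R) :
  (forall u, continuity_pt h u) -> forall t, continuity_pt (fun t => h (1 - t)) t.
Proof.
  intros H t. apply (continuity_pt_comp (fun t => 1 - t) h); [|apply H].
  apply derivable_continuous_pt. exists (-1). apply derivable_pt_lim_one_minus.
Qed.

Lemma RiemannInt_ftc f F a b (h : a <= b)
  (cf : forall x, a <= x <= b -> continuity_pt f x)
  (dF : forall x, a <= x <= b -> derivable_pt_lim F x (f x))
  (pr : Riemann_integrable f a b) :
  RiemannInt pr = F b - F a.
Proof.
  rewrite (RiemannInt_P20 h (FTC_P1 h cf) pr).
  assert (HF : antiderivative f F a b).
  { split; auto. intros x Hx. exists (exist _ (f x) (dF x Hx)).
    symmetry; apply derive_pt_eq_0; auto. }
  destruct (antiderivative_Ucte _ _ _ _ _ (RiemannInt_P29 h cf) HF) as [C HC].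
  rewrite !HC; [ring | lra | lra].
Qed.

Lemma RiemannInt_scal f c (pr : Riemann_integrable f 0 1)
  (prc : Riemann_integrable (fun t => c * f t) 0 1) :
  RiemannInt prc = c * RiemannInt pr.
Proof.
  pose (pr0 := RiemannInt_P14 0 1 0).
  pose (pr1 := RiemannInt_P10 c pr0 pr).
  rewrite (RiemannInt_P18 prc pr1) by (lra || (intros; unfold fct_cte; ring)).
  rewrite (RiemannInt_P13 pr0 pr pr1), RiemannInt_P15. ring.
Qed.

(* The integrand of [Beta x y], made continuous on [R] for [x, y >= 1]. *)
Definition beta_kernel (x y t : R) : R := powz (x - 1) t * powz (y - 1) (1 - t).

Lemma beta_kernel_continuity x y :
  1 <= x -> 1 <= y -> forall t, continuity_pt (beta_kernel x y) t.
Proof.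
  intros Hx Hy t.
  apply (continuity_pt_mult (powz (x - 1)) (fun t => powz (y - 1) (1 - t))).
  - apply powz_continuity; lra.
  - apply continuity_pt_one_minus, powz_continuity; lra.
Qed.

Lemma beta_kernel_integrable x y :
  1 <= x -> 1 <= y -> Riemann_integrable (beta_kernel x y) 0 1.
Proof.
  intros. apply continuity_implies_RiemannInt; [lra|].
  intros; now apply beta_kernel_continuity.
Qed.

Lemma Beta_RiemannInt x y (Hx : 1 <= x) (Hy : 1 <= y)
  (pr : Riemann_integrable (beta_kernel x y) 0 1) :
  Beta x y = RiemannInt pr.
Proof.
  assert (Hext : forall t, 0 <= t <= 1 -> beta_kernel x y t = beta_integrand x y t).
  { intros t Ht. unfold beta_kernel, beta_integrand. rewrite !powz_rpow by lra. reflexivity. }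
  assert (Hb : Riemann_integrable (beta_integrand x y) 0 1).
  { apply Riemann_integrable_ext with (beta_kernel x y); auto.
    intros t Ht. rewrite Rmin_left, Rmax_right in Ht by lra. now apply Hext. }
  unfold Beta.
  destruct (epsilon_spec (inhabits 0) (fun l => exists pr, RiemannInt pr = l)
     (ex_intro _ (RiemannInt Hb) (ex_intro _ Hb eq_refl))) as [pr' <-].
  apply RiemannInt_P18; [lra|]. intros t Ht. symmetry. apply Hext; lra.
Qed.

Lemma RiemannInt_beta_comb x1 y1 x2 y2 c1 c2 f (pr : Riemann_integrable f 0 1) :
  1 <= x1 -> 1 <= y1 -> 1 <= x2 -> 1 <= y2 ->
  (forall t, 0 < t < 1 -> f t = c1 * beta_kernel x1 y1 t + c2 * beta_kernel x2 y2 t) ->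
  RiemannInt pr = c1 * Beta x1 y1 + c2 * Beta x2 y2.
Proof.
  intros Hx1 Hy1 Hx2 Hy2 Hf.
  pose (p1 := beta_kernel_integrable x1 y1 Hx1 Hy1).
  pose (p2 := beta_kernel_integrable x2 y2 Hx2 Hy2).
  pose (p1c := Riemann_integrable_scal c1 p1).
  pose (p3 := RiemannInt_P10 c2 p1c p2).
  rewrite (RiemannInt_P18 pr p3) by (lra || auto).
  rewrite (RiemannInt_P13 p1c p2 p3), (RiemannInt_scal _ _ p1 p1c),
    (Beta_RiemannInt _ _ Hx1 Hy1 p1), (Beta_RiemannInt _ _ Hx2 Hy2 p2).
  ring.
Qed.

Lemma Beta_1_l y : 1 <= y -> Beta 1 y = 1 / y.
Proof.
  intros Hy.
  set (D := fun t => - y * powz (y - 1) (1 - t)).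
  assert (HD : forall t, derivable_pt_lim (fun t => powz_prim y (1 - t)) t (D t)).
  { intros t. unfold D. replace (- y * powz (y - 1) (1 - t)) with (y * powz (y - 1) (1 - t) * -1) by ring.
    apply (derivable_pt_lim_comp (fun t => 1 - t) (powz_prim y)).
    - apply derivable_pt_lim_one_minus.
    - now apply powz_prim_derivable. }
  assert (HC : forall t, continuity_pt D t).
  { intros t. apply (continuity_pt_scal (fun t => powz (y - 1) (1 - t))).
    apply continuity_pt_one_minus, powz_continuity; lra. }
  pose (pr := continuity_implies_RiemannInt (Rle_0_1) (fun x _ => HC x)).
  pose proof (RiemannInt_ftc D _ 0 1 Rle_0_1 (fun x _ => HC x) (fun x _ => HD x) pr) as H.
  rewrite (RiemannInt_beta_comb 1 y 1 y (- y) 0 D pr) in H; try lra.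
  - rewrite Rminus_diag, Rminus_0_r, !powz_prim_nonneg, powz_nonpos, powz_1 in H by lra.
    field_simplify_eq; lra.
  - intros t Ht. unfold D, beta_kernel. rewrite Rminus_diag, powz_0. ring.
Qed.

Lemma Beta_split x y : 1 <= x -> 1 <= y -> Beta x y = Beta (x + 1) y + Beta x (y + 1).
Proof.
  intros Hx Hy. rewrite (Beta_RiemannInt x y Hx Hy (beta_kernel_integrable x y Hx Hy)).
  rewrite (RiemannInt_beta_comb (x + 1) y x (y + 1) 1 1); try lra.
  intros t Ht. unfold beta_kernel. rewrite !powz_pos by lra.
  replace (x + 1 - 1) with ((x - 1) + 1) by ring. replace (y + 1 - 1) with ((y - 1) + 1) by ring.
  rewrite !Rpower_plus, !Rpower_1 by lra. ring.
Qed.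

(* Integration by parts against the antiderivative [t ^ x (1 - t) ^ y], which
   vanishes at both ends. *)
Lemma Beta_parts x y : 1 <= x -> 1 <= y -> x * Beta x (y + 1) = y * Beta (x + 1) y.
Proof.
  intros Hx Hy.
  set (Dl := fun t => x * powz (x - 1) t * powz_prim y (1 - t)).
  set (Dr := fun t => powz_prim x t * (y * powz (y - 1) (1 - t) * -1)).
  set (D := fun t => Dl t + Dr t).
  assert (HD : forall t, derivable_pt_lim (fun t => powz_prim x t * powz_prim y (1 - t)) t (D t)).
  { intros t. exact (derivable_pt_lim_mult (powz_prim x) (fun t => powz_prim y (1 - t)) t _ _
      (powz_prim_derivable x Hx t)
      (derivable_pt_lim_comp (fun t => 1 - t) (powz_prim y) t _ _
         (derivable_pt_lim_one_minus t) (powz_prim_derivable y Hy (1 - t)))). }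
  assert (HC : forall t, continuity_pt D t).
  { intros t. apply (continuity_pt_plus Dl Dr).
    - apply (continuity_pt_mult (fun t => x * powz (x - 1) t) (fun t => powz_prim y (1 - t))).
      + apply (continuity_pt_scal (powz (x - 1))), powz_continuity; lra.
      + now apply continuity_pt_one_minus, powz_prim_continuity.
    - apply (continuity_pt_mult (powz_prim x) (fun t => y * powz (y - 1) (1 - t) * -1)).
      + now apply powz_prim_continuity.
      + apply (continuity_pt_mult (fun t => y * powz (y - 1) (1 - t)) (fct_cte (-1))).
        * apply (continuity_pt_scal (fun t => powz (y - 1) (1 - t))).
          apply continuity_pt_one_minus, powz_continuity; lra.
        * apply continuity_pt_const; now unfold constant, fct_cte. }
  pose (pr := continuity_implies_RiemannInt Rle_0_1 (fun x _ => HC x)).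
  pose proof (RiemannInt_ftc D _ 0 1 Rle_0_1 (fun x _ => HC x) (fun x _ => HD x) pr) as H.
  rewrite (RiemannInt_beta_comb x (y + 1) (x + 1) y x (- y) D pr) in H; try lra.
  - rewrite Rminus_diag, Rminus_0_r, !powz_prim_nonneg, !(powz_nonpos _ 0) in H by lra.
    lra.
  - intros t Ht. unfold D, Dl, Dr, beta_kernel. rewrite !powz_prim_nonneg, !powz_pos by lra.
    replace (x + 1 - 1) with x by ring. replace (y + 1 - 1) with y by ring. ring.
Qed.

Lemma Beta_succ_l x y : 1 <= x -> 1 <= y -> Beta (x + 1) y = x / (x + y) * Beta x y.
Proof.
  intros Hx Hy. pose proof (Beta_split x y Hx Hy). pose proof (Beta_parts x y Hx Hy).
  apply (Rmult_eq_reg_l (x + y)); [|lra]. field_simplify; [nra | lra].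
Qed.

Lemma falling_pos q k : INR k - 1 < q -> 0 < falling q k.
Proof.
  induction k as [|k IH]; intros H; simpl falling; [lra|].
  rewrite S_INR in H. pose proof (pos_INR k).
  apply Rmult_lt_0_compat; [apply IH|]; lra.
Qed.

Lemma binomR_nonneg q k : INR k - 1 < q -> 0 <= binomR q k.
Proof.
  intros H. left. apply Rdiv_lt_0_compat; [now apply falling_pos|].
  apply lt_0_INR, lt_O_fact.
Qed.

Lemma falling_succ z k : falling z (S k) = z * falling (z - 1) k.
Proof.
  induction k as [|k IH]; [simpl; ring|].
  change (falling z (S (S k))) with (falling z (S k) * (z - INR (S k))).
  rewrite IH, S_INR. simpl falling. ring.
Qed.

Lemma binomR_succ z k : binomR z (S k) = z / INR (S k) * binomR (z - 1) k.
Proof.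
  unfold binomR. rewrite falling_succ. change (fact (S k)) with (S k * fact k)%nat.
  rewrite mult_INR. field. split; [apply INR_fact_neq_0 | apply not_0_INR; lia].
Qed.

Lemma binomR_Beta p k : (1 <= k)%nat -> 1 <= p - INR k ->
  binomR p k * Beta (INR k) (p - INR k) = p / (INR k * (p - INR k)).
Proof.
  revert p. induction k as [|k IH]; intros p Hk Hy; [lia|].
  rewrite binomR_succ, S_INR in *.
  destruct (Nat.eq_dec k 0) as [->|Hk0].
  - unfold binomR. simpl in *. rewrite Rplus_0_l, Beta_1_l by lra. field. lra.
  - pose proof (IH (p - 1) ltac:(lia) ltac:(lra)) as H.
    assert (Hk1 : 1 <= INR k) by (apply (le_INR 1); lia).
    replace (p - (INR k + 1)) with (p - 1 - INR k) in * by ring.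
    rewrite Beta_succ_l by lra.
    replace (INR k + (p - 1 - INR k)) with (p - 1) by ring.
    transitivity (p / (INR k + 1) * (INR k / (p - 1)) * (binomR (p - 1) k * Beta (INR k) (p - 1 - INR k)));
      [ring|].
    rewrite H. field. lra.
Qed.

Lemma binomR_Beta_shift p k : 1 <= p - INR k - 1 ->
  binomR (p - 2) k * Beta (INR k + 1) (p - INR k - 1) = 1 / (p - 1).
Proof.
  revert p. induction k as [|k IH]; intros p Hy.
  - unfold binomR. simpl in *. rewrite Rplus_0_l, Rminus_0_r, Beta_1_l by lra. field. lra.
  - pose proof (pos_INR k) as Hk.
    rewrite binomR_succ, S_INR in *.
    pose proof (IH (p - 1) ltac:(lra)) as H.
    replace (p - 1 - 2) with (p - 2 - 1) in H by ring.
    replace (p - (INR k + 1) - 1) with (p - 1 - INR k - 1) in * by ring.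
    rewrite Beta_succ_l by lra.
    replace (INR k + 1 + (p - 1 - INR k - 1)) with (p - 1) by ring.
    transitivity ((p - 2) / (INR k + 1) * ((INR k + 1) / (p - 1)) *
      (binomR (p - 2 - 1) k * Beta (INR k + 1) (p - 1 - INR k - 1))); [ring|].
    rewrite H. field. lra.
Qed.

(* The logarithm of [max_{0<t<1} t ^ x (1 - t) ^ y], attained at [t = x / (x + y)]. *)
Definition ln_beta_peak (x y : R) : R := x * ln (x / (x + y)) + y * ln (y / (x + y)).

Lemma ln_beta_peak_ge x y t : 0 < x -> 0 < y -> 0 < t < 1 ->
  x * ln t + y * ln (1 - t) <= ln_beta_peak x y.
Proof.
  intros Hx Hy Ht. unfold ln_beta_peak.
  pose proof (ln_le_sub_1 (t * (x + y) / x) ltac:(apply Rdiv_lt_0_compat; nra)) as h1.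
  pose proof (ln_le_sub_1 ((1 - t) * (x + y) / y) ltac:(apply Rdiv_lt_0_compat; nra)) as h2.
  rewrite ln_div, ln_mult in h1, h2 by nra. rewrite !ln_div by lra.
  apply Rmult_le_compat_l with (r := x) in h1; [|lra].
  apply Rmult_le_compat_l with (r := y) in h2; [|lra].
  replace (x * (t * (x + y) / x - 1)) with (t * (x + y) - x) in h1 by (field; lra).
  replace (y * ((1 - t) * (x + y) / y - 1)) with ((1 - t) * (x + y) - y) in h2 by (field; lra).
  nra.
Qed.

(* The integrand of [Beta (a x) (a y)] is that of [Beta x y] times
   [(t ^ x (1 - t) ^ y) ^ (a - 1)]. *)
Lemma Beta_scale_le a x y : 1 <= a -> 1 <= x -> 1 <= y ->
  Beta (a * x) (a * y) <= exp ((a - 1) * ln_beta_peak x y) * Beta x y.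
Proof.
  intros Ha Hx Hy. set (E := exp _).
  assert (Hax : 1 <= a * x) by nra. assert (Hay : 1 <= a * y) by nra.
  pose (pr := beta_kernel_integrable x y Hx Hy).
  pose (prE := Riemann_integrable_scal E pr).
  rewrite (Beta_RiemannInt _ _ Hax Hay (beta_kernel_integrable _ _ Hax Hay)),
    (Beta_RiemannInt x y Hx Hy pr), <- (RiemannInt_scal _ _ pr prE).
  apply RiemannInt_P19; [lra|]. intros t Ht. unfold beta_kernel.
  rewrite !powz_pos by lra. unfold E, Rpower. rewrite <- !exp_plus. apply exp_nondecreasing.
  pose proof (ln_beta_peak_ge x y t ltac:(lra) ltac:(lra) Ht) as H.
  apply Rmult_le_compat_l with (r := a - 1) in H; [|lra]. nra.
Qed.

Definition peak_rate : R := ln (4 / 3) - 1 / 3.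

Lemma peak_rate_neg : peak_rate < 0.
Proof.
  unfold peak_rate. pose proof (exp_ineq1 (1 / 3) ltac:(lra)).
  assert (ln (4 / 3) < ln (exp (1 / 3))) by (apply ln_increasing; lra).
  rewrite ln_exp in *. lra.
Qed.

Lemma ln_INR_le n : (1 <= n)%nat -> ln (INR n) <= (INR n - 1) * ln 2.
Proof.
  intros Hn. destruct n as [|m]; [lia|].
  assert (Hm : INR (S m) <= 2 ^ m).
  { clear Hn. induction m as [|m IH]; [simpl; lra|].
    rewrite S_INR. change (2 ^ S m) with (2 * 2 ^ m). pose proof (pow_R1_Rle 2 m ltac:(lra)). lra. }
  apply Rle_trans with (ln (2 ^ m)).
  - apply ln_nondecreasing; [apply lt_0_INR; lia | auto].
  - rewrite ln_pow, S_INR by lra. right; ring.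
Qed.

(* With [x = k], [x + y = p]: [y ln (y / p) <= - x y / p <= - x / 3], while
   [x ln (x / p) + ln p = (x - 1) ln (x / p) + ln x] with [x / p <= 2 / 3]
   and [ln x <= (x - 1) ln 2]. *)
Lemma ln_beta_peak_le p k : 3 <= p -> (1 <= k)%nat -> INR k <= (p + 1) / 2 ->
  ln_beta_peak (INR k) (p - INR k) + ln p <= (INR k - 1) * peak_rate.
Proof.
  intros Hp Hk HK. unfold ln_beta_peak. replace (INR k + (p - INR k)) with p by ring.
  assert (Hk1 : 1 <= INR k) by (apply (le_INR 1); auto).
  pose proof (ln_INR_le k Hk) as Hlnk.
  set (x := INR k) in *.
  assert (Hy : (p - x) * ln ((p - x) / p) <= - x / 3).
  { pose proof (ln_le_sub_1 ((p - x) / p) ltac:(apply Rdiv_lt_0_compat; lra)) as h.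
    apply Rmult_le_compat_l with (r := p - x) in h; [|lra].
    apply Rle_trans with (1 := h).
    replace ((p - x) * ((p - x) / p - 1)) with (- ((p - x) * x) / p) by (field; lra).
    apply Rmult_le_reg_r with p; [lra|]. unfold Rdiv. rewrite Rmult_assoc, Rinv_l by lra. nra. }
  assert (Hx : ln (x / p) <= ln (2 / 3)).
  { apply ln_nondecreasing; [apply Rdiv_lt_0_compat; lra|].
    apply Rmult_le_reg_r with p; [lra|]. unfold Rdiv. rewrite Rmult_assoc, Rinv_l by lra. lra. }
  rewrite ln_div in Hx |- * by lra.
  assert (H43 : ln (4 / 3) = ln 2 + ln (2 / 3)) by (rewrite <- ln_mult by lra; f_equal; field).
  unfold peak_rate. rewrite H43.
  apply Rmult_le_compat_l with (r := x - 1) in Hx; [|lra].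
  nra.
Qed.

Lemma exp_pow_INR x n : exp x ^ n = exp (INR n * x).
Proof.
  induction n as [|n IH]; [simpl; now rewrite Rmult_0_l, exp_0|].
  rewrite S_INR, <- tech_pow_Rmult, IH, <- exp_plus. f_equal. ring.
Qed.

Lemma exp_ln_beta_peak_le a p k : 1 <= a -> 3 <= p -> (1 <= k)%nat -> INR k <= (p + 1) / 2 ->
  exp ((a - 1) * ln_beta_peak (INR k) (p - INR k))
    <= Rpower p (1 - a) * exp ((a - 1) * peak_rate) ^ (k - 1).
Proof.
  intros Ha Hp Hk HK. rewrite exp_pow_INR, minus_INR by lia.
  unfold Rpower. rewrite <- exp_plus. apply exp_nondecreasing.
  pose proof (ln_beta_peak_le p k Hp Hk HK) as H.
  apply Rmult_le_compat_l with (r := a - 1) in H; [|lra].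
  simpl INR. nra.
Qed.

Lemma kp_spec p : 3 <= p -> (1 <= kp p)%nat /\ INR (kp p) <= (p + 1) / 2.
Proof.
  intros Hp. unfold kp. destruct (base_Int_part ((p + 1) / 2)) as [H1 H2].
  set (z := Int_part ((p + 1) / 2)) in *.
  assert (Hz : (1 <= z)%Z).
  { destruct (Z_lt_le_dec z 1) as [h|h]; auto.
    assert (Hz0 : (z <= 0)%Z) by lia. apply IZR_le in Hz0. lra. }
  rewrite INR_IZR_INZ, Z2Nat.id by lia. split; [lia | auto].
Qed.

Lemma binomR_Beta_scale_le a p k : 1 <= a -> 3 <= p -> (1 <= k)%nat -> INR k <= (p + 1) / 2 ->
  binomR p k * Beta (a * INR k) (a * (p - INR k))
    <= 3 * Rpower p (1 - a) * exp ((a - 1) * peak_rate) ^ (k - 1).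
Proof.
  intros Ha Hp Hk HK.
  assert (Hk1 : 1 <= INR k) by (apply (le_INR 1); auto).
  pose proof (Beta_scale_le a (INR k) (p - INR k) Ha Hk1 ltac:(lra)) as HB.
  pose proof (binomR_nonneg p k ltac:(lra)) as Hb.
  pose proof (exp_ln_beta_peak_le a p k Ha Hp Hk HK) as HE.
  assert (Hq : p / (INR k * (p - INR k)) <= 3).
  { apply Rmult_le_reg_r with (INR k * (p - INR k)); [nra|].
    unfold Rdiv. rewrite Rmult_assoc, Rinv_l by nra. nra. }
  apply Rle_trans with (exp ((a - 1) * ln_beta_peak (INR k) (p - INR k)) *
                        (binomR p k * Beta (INR k) (p - INR k))).
  { rewrite <- Rmult_assoc, (Rmult_comm _ (binomR p k)), Rmult_assoc.
    now apply Rmult_le_compat_l. }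
  rewrite binomR_Beta by (auto || lra).
  apply Rle_trans with (Rpower p (1 - a) * exp ((a - 1) * peak_rate) ^ (k - 1) * 3); [|right; ring].
  apply Rmult_le_compat; [apply Rlt_le, exp_pos | apply Rlt_le, Rdiv_lt_0_compat; nra | auto | auto].
Qed.

Lemma binomR_Beta_shift_scale_le a p k : 1 <= a -> 3 <= p -> INR k + 1 <= (p + 1) / 2 ->
  binomR (p - 2) k * Beta (a * (INR k + 1)) (a * (p - INR k - 1))
    <= 3 / 2 * Rpower p (- a) * exp ((a - 1) * peak_rate) ^ k.
Proof.
  intros Ha Hp HK. pose proof (pos_INR k) as Hk0.
  pose proof (Beta_scale_le a (INR k + 1) (p - INR k - 1) Ha ltac:(lra) ltac:(lra)) as HB.
  pose proof (binomR_nonneg (p - 2) k ltac:(lra)) as Hb.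
  pose proof (exp_ln_beta_peak_le a p (S k) Ha Hp ltac:(lia) ltac:(rewrite S_INR; lra)) as HE.
  rewrite S_INR in HE. replace (S k - 1)%nat with k in HE by lia.
  replace (p - (INR k + 1)) with (p - INR k - 1) in HE by ring.
  assert (Hpow : Rpower p (1 - a) = p * Rpower p (- a)).
  { replace (1 - a) with (1 + - a) by ring. now rewrite Rpower_plus, Rpower_1 by lra. }
  apply Rle_trans with (exp ((a - 1) * ln_beta_peak (INR k + 1) (p - INR k - 1)) *
                        (binomR (p - 2) k * Beta (INR k + 1) (p - INR k - 1))).
  { rewrite <- Rmult_assoc, (Rmult_comm _ (binomR (p - 2) k)), Rmult_assoc.
    now apply Rmult_le_compat_l. }
  rewrite binomR_Beta_shift by lra.
  apply Rle_trans with (Rpower p (- a) * exp ((a - 1) * peak_rate) ^ k * (p / (p - 1))).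
  - replace (Rpower p (- a) * exp ((a - 1) * peak_rate) ^ k * (p / (p - 1)))
      with (Rpower p (1 - a) * exp ((a - 1) * peak_rate) ^ k * (1 / (p - 1)))
      by (rewrite Hpow; field; lra).
    apply Rmult_le_compat_r; [apply Rlt_le, Rdiv_lt_0_compat; lra | auto].
  - replace (3 / 2 * Rpower p (- a) * exp ((a - 1) * peak_rate) ^ k)
      with (Rpower p (- a) * exp ((a - 1) * peak_rate) ^ k * (3 / 2)) by ring.
    apply Rmult_le_compat_l.
    + apply Rmult_le_pos; [apply Rlt_le, exp_pos | apply pow_le, Rlt_le, exp_pos].
    + apply Rmult_le_reg_r with (p - 1); [lra|]. unfold Rdiv.
      rewrite Rmult_assoc, Rinv_l by lra. lra.
Qed.

Lemma sum_geometric_le (u : nat -> R) C r N : 0 <= r < 1 -> 0 <= C ->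
  (forall n, (n <= N)%nat -> u n <= C * r ^ n) -> sum_f_R0 u N <= C / (1 - r).
Proof.
  intros Hr HC Hu. apply Rle_trans with (sum_f_R0 (fun n => r ^ n * C) N).
  { apply sum_Rle. intros n Hn. rewrite Rmult_comm. now apply Hu. }
  rewrite <- scal_sum, tech3 by lra.
  pose proof (pow_le r (S N) ltac:(lra)).
  unfold Rdiv. rewrite <- Rmult_assoc. apply Rmult_le_compat_r.
  - apply Rlt_le, Rinv_0_lt_compat; lra.
  - nra.
Qed.

Lemma sum_harmonic_le N : sum_f_R0 (fun n => 1 / INR (S n)) N <= 1 + ln (INR (S N)).
Proof.
  induction N as [|N IH].
  - simpl. rewrite ln_1. lra.
  - rewrite tech5. set (m := INR (S N)) in *.
    assert (Hm : 1 <= m) by (unfold m; rewrite S_INR; pose proof (pos_INR N); lra).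
    replace (INR (S (S N))) with (m + 1) by (unfold m; rewrite (S_INR (S N)); ring).
    pose proof (ln_le_sub_1 (m / (m + 1)) ltac:(apply Rdiv_lt_0_compat; lra)) as h.
    rewrite ln_div in h by lra.
    replace (m / (m + 1) - 1) with (- (1 / (m + 1))) in h by (field; lra). lra.
Qed.

Lemma sum_binomR_Beta_le p : 3 <= p ->
  sum_f 1 (kp p) (fun k => binomR p k * Beta (INR k) (p - INR k)) <= 4 * ln p.
Proof.
  intros Hp. destruct (kp_spec p Hp) as [Hk1 Hkp]. unfold sum_f.
  apply Rle_trans with (sum_f_R0 (fun n => 1 / INR (S n) + 2 / (p - 1)) (kp p - 1)).
  { apply sum_Rle. intros n Hn. replace (n + 1)%nat with (S n) by lia.
    assert (HK : INR (S n) <= (p + 1) / 2) by (apply Rle_trans with (INR (kp p)); [apply le_INR; lia | auto]).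
    assert (HK1 : 1 <= INR (S n)) by (apply (le_INR 1); lia).
    rewrite binomR_Beta by (lia || lra).
    replace (p / (INR (S n) * (p - INR (S n)))) with (1 / INR (S n) + 1 / (p - INR (S n))) by (field; lra).
    apply Rplus_le_compat_l.
    apply Rmult_le_reg_r with ((p - INR (S n)) * (p - 1)); [nra|].
    field_simplify; lra. }
  rewrite sum_plus, sum_cte. pose proof (sum_harmonic_le (kp p - 1)) as H.
  replace (S (kp p - 1)) with (kp p) in * by lia.
  assert (Hln : ln (INR (kp p)) <= ln p) by (apply ln_nondecreasing; [apply lt_0_INR; lia | lra]).
  assert (Hln1 : 1 <= ln p).
  { rewrite <- (ln_exp 1). apply ln_nondecreasing; [apply exp_pos|]. pose proof exp_le_3. lra. }
  assert (H2 : 2 / (p - 1) * INR (kp p) <= 2).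
  { apply Rmult_le_reg_r with (p - 1); [lra|].
    replace (2 / (p - 1) * INR (kp p) * (p - 1)) with (2 * INR (kp p)) by (field; lra). lra. }
  lra.
Qed.

Lemma exp_peak_rate_lt_1 a : 1 < a -> 0 <= exp ((a - 1) * peak_rate) < 1.
Proof.
  intros Ha. split; [apply Rlt_le, exp_pos|].
  apply Rlt_le_trans with (exp 0); [apply exp_increasing | rewrite exp_0; lra].
  pose proof peak_rate_neg. nra.
Qed.

(* [Rpower a a] absorbs the factor [a ^ s] of [(a p) ^ s] for [s = 1 - a] and [s = - a]. *)
Definition beta_sum_const (a : R) : R := 3 * Rpower a a / (1 - exp ((a - 1) * peak_rate)).

Lemma beta_sum_const_pos a : 1 < a -> 0 < beta_sum_const a.
Proof.
  intros Ha. pose proof (exp_peak_rate_lt_1 a Ha).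
  apply Rdiv_lt_0_compat; [apply Rmult_lt_0_compat, exp_pos|]; lra.
Qed.

Lemma beta_sum_const_mult a p s : 0 < a -> 0 < p ->
  beta_sum_const a * Rpower (a * p) s
    = 3 * Rpower a (a + s) * Rpower p s / (1 - exp ((a - 1) * peak_rate)).
Proof.
  intros Ha Hp. unfold beta_sum_const.
  rewrite <- Rpower_mult_distr, Rpower_plus by lra. unfold Rdiv. ring.
Qed.

Lemma sum_binomR_Beta_scale_le a p : 1 < a -> 3 <= p ->
  sum_f 1 (kp p) (fun k => binomR p k * Beta (a * INR k) (a * (p - INR k)))
    <= beta_sum_const a * Rpower (a * p) (1 - a).
Proof.
  intros Ha Hp. destruct (kp_spec p Hp) as [Hk1 Hkp]. pose proof (exp_peak_rate_lt_1 a Ha) as Hr.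
  assert (Hp1 : 0 < Rpower p (1 - a)) by apply exp_pos.
  apply Rle_trans with (3 * Rpower p (1 - a) / (1 - exp ((a - 1) * peak_rate))).
  - unfold sum_f. apply sum_geometric_le; [auto | lra |].
    intros n Hn.
    assert (HK : INR (n + 1) <= (p + 1) / 2) by (apply Rle_trans with (INR (kp p)); [apply le_INR; lia | auto]).
    pose proof (binomR_Beta_scale_le a p (n + 1) ltac:(lra) Hp ltac:(lia) HK) as H.
    now replace (n + 1 - 1)%nat with n in H by lia.
  - rewrite beta_sum_const_mult, Rplus_minus, Rpower_1 by lra.
    apply Rmult_le_compat_r; [apply Rlt_le, Rinv_0_lt_compat; lra | nra].
Qed.

Lemma sum_binomR_Beta_shift_scale_le a p : 1 < a -> 3 <= p ->
  sum_f_R0 (fun k => binomR (p - 2) k * Beta (a * (INR k + 1)) (a * (p - INR k - 1))) (kp p - 1)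
    <= beta_sum_const a * Rpower (a * p) (- a).
Proof.
  intros Ha Hp. destruct (kp_spec p Hp) as [Hk1 Hkp]. pose proof (exp_peak_rate_lt_1 a Ha) as Hr.
  assert (Hp1 : 0 < Rpower p (- a)) by apply exp_pos.
  apply Rle_trans with (3 / 2 * Rpower p (- a) / (1 - exp ((a - 1) * peak_rate))).
  - apply sum_geometric_le; [auto | lra |].
    intros n Hn. apply binomR_Beta_shift_scale_le; try lra.
    rewrite <- S_INR. apply Rle_trans with (INR (kp p)); [apply le_INR; lia | auto].
  - rewrite beta_sum_const_mult, Rplus_opp_r, Rpower_O by lra.
    apply Rmult_le_compat_r; [apply Rlt_le, Rinv_0_lt_compat; lra | lra].
Qed.

Theorem lemma3p3 :
  (forall p : R, 3 <= p ->
     sum_f 1 (kp p) (fun k => binomR p k * Beta (INR k) (p - INR k)) <= 4 * ln p)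
  /\
  (forall a : R, 1 < a ->
     exists Ca : R, 0 < Ca /\
       forall p : R, 3 <= p ->
         sum_f 1 (kp p)
           (fun k => binomR p k * Beta (a * INR k) (a * (p - INR k)))
           <= Ca * Rpower (a * p) (1 - a)
         /\
         sum_f_R0
           (fun k => binomR (p - 2) k * Beta (a * (INR k + 1)) (a * (p - INR k - 1)))
           (kp p - 1)
           <= Ca * Rpower (a * p) (- a)).
Proof.
  split; [exact sum_binomR_Beta_le|].
  intros a Ha. exists (beta_sum_const a).
  split; [now apply beta_sum_const_pos|].
  intros p Hp. split.
  - now apply sum_binomR_Beta_scale_le.
  - now apply sum_binomR_Beta_shift_scale_le.
Qed.
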